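(* Let $Q$ be a TC-query with timing sequence $\{\epsilon_1,\dots,\epsilon_k\}$ and expansion list $L=\{L^1,\dots,L^k\}$, where $L^j$ stores $\Omega(Preq(\epsilon_j))$ in the current snapshot. Suppose an incoming edge $\sigma$ (which has the largest timestamp in the current window) matches query edge $\epsilon_i$. Then, among the items of $L$, only the partial matches of $L^i$ (i.e., of $Preq(\epsilon_i)$) need to be updated due to $\sigma$ playing the role of $\epsilon_i$. Moreover: (1) if $i=1$, $\sigma$ is inserted into $L^1$ as a new match of $Preq(\epsilon_1)=\{\epsilon_1\}$; (2) if $i\neq 1$ and $\Omega(L^{i-1})\bowtie\{\sigma\}\neq\emptyset$, then $\Omega(L^{i-1})\bowtie\{\sigma\}$ is inserted into $L^i$ as the new matches of $Preq(\epsilon_i)$, where $\Omega(L^{i-1})$ is the set of partial matches stored in $L^{i-1}$.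
   Context: Streaming graph: a growing sequence of labelled directed edges $\sigma_1,\sigma_2,\dots$ with strictly increasing timestamps; with a window of duration $|W|$, the snapshot at time $t$ contains the edges with timestamps in $(t-|W|,t]$. A query $Q=(V(Q),E(Q),L,\prec)$ has a vertex labelling and a strict partial order $\prec$ (timing order) on its directed edges. A time-constrained match of a (sub)query is a subgraph $g$ of the snapshot with a label-preserving bijection $F$ from query vertices to $V(g)$ such that $\overrightarrow{uv}$ is a query edge iff $\overrightarrow{F(u)F(v)}\in E(g)$, and $\epsilon\prec\epsilon'$ implies the data edge matched to $\epsilon$ has smaller timestamp than that matched to $\epsilon'$. $\Omega(Q')$ denotes the set of matches of subquery $Q'$ in the current snapshot. For subqueries $Q^1,Q^2$ with matches $g_1,g_2$ via $F_1,F_2$, $g_1$ and $g_2$ are compatible if $g_1\cup g_2$ is a time-constrained match of $Q^1\cup Q^2$ via the bijection $F_1\cup F_2$; $\Omega(Q^1)\bowtie\Omega(Q^2)=\{g_1\cup g_2: g_1\in\Omega(Q^1),g_2\in\Omega(Q^2), g_1,g_2 \text{ compatible}\}$ (here $\{\sigma\}$ is regarded as a match of the single-edge subquery $\{\epsilon_i\}$). For $\epsilon\in E(Q)$, $Preq(\epsilon)$ is the subquery induced by $\{\epsilon':\epsilon'\prec\epsilon\}\cup\{\epsilon\}$. A prefix-connected sequence of $Q$ is an ordering $\epsilon_1,\dots,\epsilon_k$ of all edges of $Q$ such that for each $j$ the subquery induced by $\epsilon_1,\dots,\epsilon_j$ is weakly connected. $Q$ is a TC-query (timing-connected query) if it has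 a prefix-connected sequence with $\epsilon_j\prec\epsilon_{j+1}$ for all $j\in[1,k-1]$; this sequence is its timing sequence. The expansion list of a TC-query is $L=\{L^1,\dots,L^k\}$, where item $L^i$ corresponds to the subquery $\{\epsilon_1,\dots,\epsilon_i\}$ (which equals $Preq(\epsilon_i)$) and records the set $\Omega(L^i)$ of its time-constrained matches in the current snapshot. *)

From mathcomp Require Import all_boot.
From Stdlib Require Import Relations.
Set Implicit Arguments. Unset Strict Implicit. Unset Printing Implicit Defensive.

Record dedge (DV : Type) := DEdge { esrc : DV; edst : DV; etime : nat }.

Definition stream_ok (DV : Type) (str : nat -> dedge DV) : Prop :=
  forall n, etime (str n) < etime (str n.+1).

Definition snapshot (DV : Type) (str : nat -> dedge DV) (W t : nat)
  : dedge DV -> Prop :=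
  fun e => exists m, str m = e /\ etime e <= t /\ t < etime e + W.

Record query (Lbl : Type) := Query {
  qV : finType;
  qE : finType;
  qsrc : qE -> qV;
  qdst : qE -> qV;
  qlab : qV -> Lbl;
  prec : rel qE
}.

Definition query_wf (Lbl : Type) (Q : query Lbl) : Prop :=
  (forall e e' : qE Q, qsrc e = qsrc e' -> qdst e = qdst e' -> e = e') /\
  (forall e : qE Q, ~~ prec e e) /\
  (forall e1 e2 e3 : qE Q, prec e1 e2 -> prec e2 e3 -> prec e1 e3).

(* A (sub)query is given by its edge set; its vertex set is the set of
   endpoints of its edges. *)
Definition in_subV (Lbl : Type) (Q : query Lbl) (Es : {set qE Q}) (u : qV Q)
  : bool := [exists e in Es, (qsrc e == u) || (qdst e == u)].

Definition Preq (Lbl : Type) (Q : query Lbl) (e : qE Q) : {set qE Q} :=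
  [set e' | prec e' e] :|: [set e].

Definition adjE (Lbl : Type) (Q : query Lbl) (Es : {set qE Q})
  (e e' : qE Q) : Prop :=
  e \in Es /\ e' \in Es /\
  [\/ qsrc e = qsrc e', qsrc e = qdst e', qdst e = qsrc e' | qdst e = qdst e'].

Definition weakly_connected (Lbl : Type) (Q : query Lbl) (Es : {set qE Q})
  : Prop :=
  forall e e', e \in Es -> e' \in Es -> clos_refl_trans _ (adjE Es) e e'.

(* s : 'I_k -> qE is an ordering of all edges of Q (bijection),
   prefix-connected, with s_j < s_{j+1} in the timing order: it is a
   timing sequence, and Q is a TC-query. *)
Definition prefix_set (Lbl : Type) (Q : query Lbl) (k : nat)
  (s : 'I_k -> qE Q) (j : nat) : {set qE Q} :=
  [set s i | i : 'I_k & (i <= j)%N].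

Definition timing_sequence (Lbl : Type) (Q : query Lbl) (k : nat)
  (s : 'I_k -> qE Q) : Prop :=
  bijective s /\
  (forall j : 'I_k, weakly_connected (prefix_set s j)) /\
  (forall i j : 'I_k, val j = (val i).+1 -> prec (s i) (s j)).

(* A (partial) match: a partial vertex map F and the partial assignment
   of data edges to query edges (g is the image of the edge assignment). *)
Record pmatch (Lbl : Type) (Q : query Lbl) (DV : Type) := PMatch {
  mv : qV Q -> option DV;
  me : qE Q -> option (dedge DV)
}.

Definition is_match (Lbl : Type) (Q : query Lbl) (DV : Type)
  (dlab : DV -> Lbl) (S : dedge DV -> Prop) (Es : {set qE Q})
  (m : pmatch Q DV) : Prop :=
  (forall u, in_subV Es u <-> mv m u <> None) /\
  (forall e, e \in Es <-> me m e <> None) /\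
  (* F injective (bijection onto V(g)) *)
  (forall u u' x, mv m u = Some x -> mv m u' = Some x -> u = u') /\
  (forall u x, mv m u = Some x -> dlab x = qlab u) /\
  (forall e d, me m e = Some d ->
     S d /\ mv m (qsrc e) = Some (esrc d) /\ mv m (qdst e) = Some (edst d)) /\
  (forall e e' d d', prec e e' -> me m e = Some d -> me m e' = Some d' ->
     etime d < etime d').

Definition Omega (Lbl : Type) (Q : query Lbl) (DV : Type)
  (dlab : DV -> Lbl) (S : dedge DV -> Prop) (Es : {set qE Q})
  : pmatch Q DV -> Prop := is_match dlab S Es.

Definition opt_union (A : Type) (a b : option A) : option A :=
  if a is Some x then Some x else b.

Definition munion (Lbl : Type) (Q : query Lbl) (DV : Type)
  (m1 m2 : pmatch Q DV) : pmatch Q DV :=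
  PMatch (fun u => opt_union (mv m1 u) (mv m2 u))
         (fun e => opt_union (me m1 e) (me m2 e)).

Definition compatible (Lbl : Type) (Q : query Lbl) (DV : Type)
  (dlab : DV -> Lbl) (S : dedge DV -> Prop) (Es1 Es2 : {set qE Q})
  (m1 m2 : pmatch Q DV) : Prop :=
  (forall u x y, mv m1 u = Some x -> mv m2 u = Some y -> x = y) /\
  (forall e d d', me m1 e = Some d -> me m2 e = Some d' -> d = d') /\
  is_match dlab S (Es1 :|: Es2) (munion m1 m2).

Definition join (Lbl : Type) (Q : query Lbl) (DV : Type)
  (dlab : DV -> Lbl) (S : dedge DV -> Prop) (Es1 Es2 : {set qE Q})
  (Om1 Om2 : pmatch Q DV -> Prop) : pmatch Q DV -> Prop :=
  fun m => exists m1 m2, Om1 m1 /\ Om2 m2 /\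
     compatible dlab S Es1 Es2 m1 m2 /\ m = munion m1 m2.

(* {sigma} regarded as a match of the single-edge subquery {e}. *)
Definition edge_match (Lbl : Type) (Q : query Lbl) (DV : Type)
  (e : qE Q) (d : dedge DV) : pmatch Q DV :=
  PMatch (fun u => if u == qsrc e then Some (esrc d)
                   else if u == qdst e then Some (edst d) else None)
         (fun e' => if e' == e then Some d else None).

(** A timing sequence is strictly increasing for the timing order, so
    [Preq (s j)] is exactly the prefix [{s 0, ..., s j}] and
    [Preq (s j.+1) = Preq (s j) :|: [set s j.+1]].  An incoming edge sigma
    carries the current time, the largest in the window, so in a match it can
    only play a maximal query edge; in [Preq (s j)] the only maximal edge is
    [s j], whence only [L^i] is affected.  A match of
    [Preq (s i') :|: [set s i]] sending [s i] to sigma is the union of its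
    restriction to [Preq (s i')] and of [{sigma}], which is exactly the join
    [Omega(L^(i')) |><| {sigma}]. *)
From mathcomp Require Import all_boot.
From Stdlib Require Import FunctionalExtensionality.

Set Implicit Arguments.
Unset Strict Implicit.
Unset Printing Implicit Defensive.

Section TimingSequence.

Variables (Lbl : Type) (Q : query Lbl) (k : nat) (s : 'I_k -> qE Q).
Hypotheses (HQ : query_wf Q) (Hts : timing_sequence s).

Lemma timing_sequence_inj : injective s.
Proof. by case: Hts => /bij_inj. Qed.

Lemma timing_sequence_prec (a b : 'I_k) : a < b -> prec (s a) (s b).
Proof.
case: HQ => _ [_ prec_trans]; case: Hts => _ [_ prec_next].
pose f j := s (insubd a j).
have f_mono : {in [pred j | j < k] &, {homo f : i j / i < j >-> prec i j}}.
  apply: homo_ltn_in => [y x z|i j _ lt_jk l /andP[_ lt_lj]|i lt_ik lt_Sik].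
  - exact: prec_trans.
  - exact: ltn_trans lt_lj lt_jk.
  - by apply: prec_next; rewrite !val_insubd !inE in lt_ik lt_Sik *; rewrite lt_ik lt_Sik.
by move=> lt_ab; have := f_mono _ _ (ltn_ord a) (ltn_ord b) lt_ab; rewrite /f !valKd.
Qed.

Lemma timing_sequence_precE (a b : 'I_k) : prec (s a) (s b) = (a < b).
Proof.
case: HQ => _ [prec_irr prec_trans].
apply/idP/idP => [prec_ab|]; last exact: timing_sequence_prec.
case: (ltngtP a b) => [//|lt_ba|/val_inj eq_ab].
- by have := prec_irr (s a); rewrite (prec_trans _ _ _ prec_ab (timing_sequence_prec lt_ba)).
- by have := prec_irr (s a); rewrite {2}eq_ab prec_ab.
Qed.

Lemma mem_Preq_timing (a j : 'I_k) : (s a \in Preq (s j)) = (a <= j).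
Proof.
by rewrite !inE timing_sequence_precE (inj_eq timing_sequence_inj) -val_eqE orbC -leq_eqVlt.
Qed.

Lemma Preq_timing_first (j : 'I_k) : val j = 0 -> Preq (s j) = [set s j].
Proof.
case: Hts => -[g _ gK] _ /= j0; apply/setP => e; rewrite -(gK e).
by rewrite mem_Preq_timing inE (inj_eq timing_sequence_inj) -val_eqE /= j0 leqn0.
Qed.

Lemma Preq_timing_succ (i j : 'I_k) :
  (val i).+1 = val j -> Preq (s j) = Preq (s i) :|: [set s j].
Proof.
case: Hts => -[g _ gK] _ /= ij; apply/setP => e; rewrite -(gK e).
rewrite in_setU in_set1 !mem_Preq_timing (inj_eq timing_sequence_inj) -val_eqE /=.
by rewrite -ij leq_eqVlt ltnS orbC.
Qed.

End TimingSequence.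

Section Matches.

Variables (Lbl DV : Type) (dlab : DV -> Lbl) (Q : query Lbl).

Lemma match_latest_edge (str : nat -> dedge DV) (W : nat) (Es : {set qE Q})
    (m : pmatch Q DV) (e e' : qE Q) (d : dedge DV) :
  is_match dlab (snapshot str W (etime d)) Es m -> me m e = Some d ->
  e' \in Es -> ~~ prec e e'.
Proof.
case=> _ [dom_e [_ [_ [edge_ok time_ok]]]] me_e /dom_e.
case me_e': (me m e') => [d'|] // _; apply/negP => prec_ee'.
have := time_ok _ _ _ _ prec_ee' me_e me_e'.
by have [[_ [_ [le_d't _]]] _] := edge_ok _ _ me_e'; rewrite ltnNge le_d't.
Qed.

Variable S : dedge DV -> Prop.

Definition mrestrict (A : {set qE Q}) (m : pmatch Q DV) : pmatch Q DV :=
  PMatch (fun u => if in_subV A u then mv m u else None)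
         (fun e => if e \in A then me m e else None).

Lemma in_subV_subset (A B : {set qE Q}) (u : qV Q) :
  A \subset B -> in_subV A u -> in_subV B u.
Proof.
by move=> /subsetP AB /existsP[e /andP[/AB eB end_e]]; apply/existsP; exists e; rewrite eB.
Qed.

Lemma in_subV_setU1 (A : {set qE Q}) (e0 : qE Q) (u : qV Q) :
  in_subV (A :|: [set e0]) u = [|| in_subV A u, u == qsrc e0 | u == qdst e0].
Proof.
apply/existsP/or3P => [[e /andP[/setUP[Ae|/set1P->] end_e]]|].
- by constructor 1; apply/existsP; exists e; rewrite Ae.
- by rewrite ![u == _]eq_sym; case/orP: end_e; [constructor 2|constructor 3].
case=> [/existsP[e /andP[Ae end_e]]|/eqP->|/eqP->].
- by exists e; rewrite inE Ae end_e.
- by exists e0; rewrite !inE !eqxx orbT.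
- by exists e0; rewrite !inE !eqxx !orbT.
Qed.

Lemma is_match_restrict (A B : {set qE Q}) (m : pmatch Q DV) :
  A \subset B -> is_match dlab S B m -> is_match dlab S A (mrestrict A m).
Proof.
move=> AB [dom_v [dom_e [inj_v [lab_v [edge_ok time_ok]]]]].
split; [|split; [|split; [|split; [|split]]]] => /=.
- by move=> u; case: ifP => // Au; split=> // _; apply/dom_v/(in_subV_subset AB).
- by move=> e; case: ifP => // Ae; split=> // _; apply/dom_e/(subsetP AB).
- by move=> u u' x; do 2!case: ifP => // _; exact: inj_v.
- by move=> u x; case: ifP => // _; exact: lab_v.
- move=> e d; case: ifP => // Ae /edge_ok.
  have end_A (u : qV Q) : (qsrc e == u) || (qdst e == u) -> in_subV A u.
    by move=> end_u; apply/existsP; exists e; rewrite Ae.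
  by rewrite !end_A ?eqxx ?orbT.
- by move=> e e' d d' prec_ee'; do 2!case: ifP => // _; exact: time_ok.
Qed.

Section EdgeExtension.

Variables (A : {set qE Q}) (e0 : qE Q) (d : dedge DV) (m : pmatch Q DV).
Hypotheses (e0_notin : e0 \notin A) (m_match : is_match dlab S (A :|: [set e0]) m)
  (m_e0 : me m e0 = Some d).

Lemma munion_restrict_edge : m = munion (mrestrict A m) (edge_match e0 d).
Proof.
case: m_match => [dom_v [dom_e [_ [_ [edge_ok _]]]]].
have [_ [src_e0 dst_e0]] := edge_ok _ _ m_e0.
transitivity (PMatch (mv m) (me m)); first by case: (m).
congr PMatch; apply: functional_extensionality => x /=.
- have := dom_v x; rewrite in_subV_setU1.
  case: (in_subV A x) => [[/(_ isT)]|]; first by case: (mv m x).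
  case: eqP => [-> _|_]; first by rewrite src_e0.
  case: eqP => [-> _|_ [_]]; first by rewrite dst_e0.
  by case: (mv m x) => // y /(_ ltac:(discriminate)).
- have := dom_e x; rewrite in_setU in_set1.
  case: (x \in A) => [[/(_ isT)]|]; first by case: (me m x).
  case: eqP => [-> _|_ [_]]; first by rewrite m_e0.
  by case: (me m x) => // y /(_ ltac:(discriminate)).
Qed.

Lemma compatible_restrict_edge :
  compatible dlab S A [set e0] (mrestrict A m) (edge_match e0 d).
Proof.
case: (m_match) => [_ [_ [_ [_ [edge_ok _]]]]].
have [_ [src_e0 dst_e0]] := edge_ok _ _ m_e0.
split; [|split]; last by rewrite -munion_restrict_edge.
- move=> u x y /=; case: ifP => // _ mv_u.
  by case: eqP => [eq_u [<-]|_]; [|case: eqP => [eq_u [<-]|//]];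
     move: mv_u; rewrite eq_u ?src_e0 ?dst_e0 => -[].
- move=> e d1 d2 /=; case: ifP => // Ae _; case: eqP => // eq_e.
  by move: e0_notin; rewrite -eq_e Ae.
Qed.

End EdgeExtension.

Lemma join_edge_matchP (A : {set qE Q}) (e0 : qE Q) (d : dedge DV) (m : pmatch Q DV) :
  e0 \notin A ->
  (is_match dlab S (A :|: [set e0]) m /\ me m e0 = Some d) <->
  join dlab S A [set e0] (Omega dlab S A) (fun m2 => m2 = edge_match e0 d) m.
Proof.
move=> e0_notin; split=> [[m_match m_e0]|[m1 [_ [m1_match [-> [compat ->]]]]]].
  exists (mrestrict A m), (edge_match e0 d); split.
    by apply: is_match_restrict m_match; apply/subsetP => e Ae; rewrite inE Ae.
  split=> //; split; first exact: compatible_restrict_edge.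
  exact: munion_restrict_edge.
case: compat => [_ [_ union_match]]; split=> //=.
case: m1_match => _ [/(_ e0) dom_e0 _].
case: (me m1 e0) dom_e0 => [x [_ /(_ ltac:(discriminate))]|_] /=; last by rewrite eqxx.
by move/negP: e0_notin.
Qed.

End Matches.

Theorem theorem2 (Lbl DV : Type) (dlab : DV -> Lbl) (Q : query Lbl)
  (HQ : query_wf Q)
  (k : nat) (s : 'I_k -> qE Q) (Hts : timing_sequence s)
  (str : nat -> dedge DV) (Hstr : stream_ok str) (W : nat) (HW : 0 < W)
  (n : nat) (i : 'I_k)
  (* sigma = str n is the incoming edge; the current time is its timestamp *)
  (Hsig : is_match dlab (snapshot str W (etime (str n))) [set s i]
            (edge_match (s i) (str n))) :
  let sigma := str n in
  let S := snapshot str W (etime sigma) in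
  (* only L^i is affected by sigma playing the role of eps_i *)
  (forall (j : 'I_k) (m : pmatch Q DV),
      is_match dlab S (Preq (s j)) m -> me m (s i) = Some sigma -> j = i) /\
  (* (1) *)
  (val i = 0 -> is_match dlab S (Preq (s i)) (edge_match (s i) sigma)) /\
  (* (2) *)
  (forall i' : 'I_k, (val i').+1 = val i ->
     (exists m, join dlab S (Preq (s i')) [set s i]
                  (Omega dlab S (Preq (s i'))) (fun m2 => m2 = edge_match (s i) sigma) m) ->
     forall m : pmatch Q DV,
       (is_match dlab S (Preq (s i)) m /\ me m (s i) = Some sigma) <->
       join dlab S (Preq (s i')) [set s i]
            (Omega dlab S (Preq (s i'))) (fun m2 => m2 = edge_match (s i) sigma) m).
Proof.
move=> sigma S; split; [|split].
- move=> j m m_match m_i.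
  have le_ij : i <= j.
    case: (m_match) => _ [/(_ (s i)) [_ dom_i] _].
    by rewrite -(mem_Preq_timing HQ Hts); apply: dom_i; rewrite m_i.
  have not_lt : ~~ (i < j).
    rewrite -(timing_sequence_precE HQ Hts).
    by apply: match_latest_edge m_match m_i _; rewrite mem_Preq_timing.
  by apply/val_inj/eqP; rewrite eqn_leq leqNgt not_lt le_ij.
- by move=> i0; rewrite (Preq_timing_first HQ Hts i0).
- move=> i' succ_i' _ m.
  rewrite (Preq_timing_succ HQ Hts succ_i'); apply: join_edge_matchP.
  by rewrite mem_Preq_timing // -ltnNge -succ_i'.
Qed.
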